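(* Let $Z,Z'\subseteq A^+$. If $Z$ and $Z'$ are both prefix alt-induced codes (respectively both suffix alt-induced codes, both bifix alt-induced codes), then $ZZ'$ is a prefix (respectively suffix, bifix) alt-induced code.
   Context: $A$ is a finite alphabet, $A^+$ the set of non-empty words, $ZZ'=\{zz':z\in Z,z'\in Z'\}$. A code is a subset of $A^+$ in which every word has at most one factorization into its elements. A prefix (suffix) code is a subset of $A^+$ in which no word is a proper prefix (suffix) of another; a bifix code is both. For non-empty $X,Y\subseteq A^+$, $(X,Y)$ is an alternative code if no word of $A^+$ admits two different similar alternative factorizations on $(X,Y)$ (factorizations $u_1\cdots u_n$, $n\ge2$, $u_i\in X\cup Y$, alternating between $X$ and $Y$; similar = beginning in the same set and ending in the same set); equivalently, $XY$ is a code and the product $XY$ is unambiguous. An alt-induced code is a set $XY$ with $(X,Y)$ an alternative code; a prefix (suffix, bifix) alt-induced code is an alt-induced code that is also a prefix (suffix, bifix) code. *)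

From mathcomp Require Import all_boot.
Set Implicit Arguments. Unset Strict Implicit. Unset Printing Implicit Defensive.

Definition lang (A : finType) := seq A -> Prop.

Definition nonempty_words (A : finType) (X : lang A) : Prop :=
  forall w, X w -> w <> [::].

Definition lprod (A : finType) (Z Z' : lang A) : lang A :=
  fun w => exists z z', [/\ Z z, Z' z' & w = z ++ z'].

Definition is_code (A : finType) (X : lang A) : Prop :=
  nonempty_words X /\
  forall us vs : seq (seq A), (forall u, u \in us -> X u) ->
    (forall v, v \in vs -> X v) -> flatten us = flatten vs -> us = vs.

Definition prefix_code (A : finType) (X : lang A) : Prop :=
  nonempty_words X /\
  forall u v, X u -> X v -> prefix u v -> u = v.

Definition suffix_code (A : finType) (X : lang A) : Prop :=
  nonempty_words X /\
  forall u v, X u -> X v -> suffix u v -> u = v.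

(* The set from which the i-th factor (0-indexed) of an alternative
   factorization beginning in X (b = true) or in Y (b = false) is taken. *)
Definition alt_set (A : finType) (X Y : lang A) (b : bool) (i : nat) : lang A :=
  if odd i then (if b then Y else X) else (if b then X else Y).

Definition alt_fact (A : finType) (X Y : lang A) (b : bool) (us : seq (seq A)) : Prop :=
  2 <= size us /\ forall i, i < size us -> alt_set X Y b i (nth [::] us i).

(* (X,Y) is an alternative code: X, Y non-empty subsets of A^+, and no word
   admits two different similar alternative factorizations (similar = same
   beginning set and same ending set; the ending set is determined by the
   beginning set and the parity of the number of factors). *)
Definition alt_code (A : finType) (X Y : lang A) : Prop :=
  [/\ nonempty_words X, nonempty_words Y, (exists x, X x), (exists y, Y y) &
   forall (b : bool) (us vs : seq (seq A)),
     alt_fact X Y b us -> alt_fact X Y b vs ->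
     odd (size us) = odd (size vs) ->
     flatten us = flatten vs -> us = vs].

Definition alt_induced (A : finType) (Z : lang A) : Prop :=
  exists X Y : lang A, alt_code X Y /\ forall w, Z w <-> lprod X Y w.

Definition prefix_alt_induced (A : finType) (Z : lang A) : Prop :=
  alt_induced Z /\ prefix_code Z.
Definition suffix_alt_induced (A : finType) (Z : lang A) : Prop :=
  alt_induced Z /\ suffix_code Z.
Definition bifix_alt_induced (A : finType) (Z : lang A) : Prop :=
  alt_induced Z /\ prefix_code Z /\ suffix_code Z.

(** The factors of an alternative factorization on (Z, Z') are read off
    greedily: from the left when Z and Z' are prefix codes, from the right
    when they are suffix codes (the parity of the number of factors fixes the
    set of the last one).  Hence (Z, Z') is itself an alternative code, so
    ZZ' is alt-induced; and ZZ' inherits the prefix (suffix) property because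
    a prefix (suffix) code factor can be cancelled from an equality of
    concatenations. *)

From mathcomp Require Import all_boot.
Set Implicit Arguments. Unset Strict Implicit. Unset Printing Implicit Defensive.

Section AltInducedProduct.

Variable A : finType.
Implicit Types (X Y Z : lang A) (u v x y : seq A) (us vs : seq (seq A)).

Lemma cat_prefix_total x y (b d : seq A) :
  x ++ b = y ++ d -> prefix x y \/ prefix y x.
Proof.
move=> exy; wlog le_xy : x y b d exy / size x <= size y => [hwlog|].
  case: (leqP (size x) (size y)) => [|/ltnW]; first exact: hwlog exy.
  by case/(hwlog _ _ _ _ (esym exy)); [right|left].
by left; rewrite prefixE -(takel_cat d le_xy) -exy take_size_cat.
Qed.

Lemma cat_suffix_total x y (a c : seq A) :
  a ++ x = c ++ y -> suffix x y \/ suffix y x.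
Proof. by move/(congr1 rev); rewrite !rev_cat; apply: cat_prefix_total. Qed.

Lemma prefix_code_catI X x y (b d : seq A) : prefix_code X -> X x -> X y ->
  x ++ b = y ++ d -> x = y /\ b = d.
Proof.
move=> [_ prefX] Xx Xy exy.
have x_eq_y : x = y.
  by case: (cat_prefix_total exy) => [/prefX|/prefX ->] //; apply.
by move/eqP: exy; rewrite eqseq_cat x_eq_y // eqxx => /eqP.
Qed.

Lemma suffix_code_catI X x y (a c : seq A) : suffix_code X -> X x -> X y ->
  a ++ x = c ++ y -> a = c /\ x = y.
Proof.
move=> [_ sufX] Xx Xy exy.
have x_eq_y : x = y.
  by case: (cat_suffix_total exy) => [/sufX|/sufX ->] //; apply.
move/(congr1 rev)/eqP: exy; rewrite !rev_cat eqseq_cat x_eq_y // eqxx.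
by move/eqP/(congr1 rev); rewrite !revK.
Qed.

Definition alt_factors X Y (b : bool) us :=
  forall i, i < size us -> alt_set X Y b i (nth [::] us i).

Lemma alt_setS X Y b i : alt_set X Y b i.+1 = alt_set X Y (~~ b) i.
Proof. by rewrite /alt_set /=; case: b; case: (odd i). Qed.

Lemma alt_set_odd X Y b i j : odd i = odd j -> alt_set X Y b i = alt_set X Y b j.
Proof. by rewrite /alt_set => ->. Qed.

Lemma alt_factors_cons X Y b u us :
  alt_factors X Y b (u :: us) -> alt_set X Y b 0 u /\ alt_factors X Y (~~ b) us.
Proof. by move=> fs; split=> [|i lt_i]; [apply: (fs 0) | rewrite -alt_setS; apply: fs]. Qed.

Lemma alt_factors_rcons X Y b us u :
  alt_factors X Y b (rcons us u) -> alt_factors X Y b us /\ alt_set X Y b (size us) u.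
Proof.
move=> fs; split=> [i lt_i|].
  by have := fs i; rewrite size_rcons nth_rcons lt_i ltnS; apply; apply: ltnW.
by have := fs (size us); rewrite size_rcons nth_rcons ltnn eqxx; apply.
Qed.

Section AltSetCodes.

Variables X Y : lang A.

Lemma alt_set_nonempty : nonempty_words X -> nonempty_words Y ->
  forall b i, nonempty_words (alt_set X Y b i).
Proof. by move=> neX neY b i; rewrite /alt_set; case: b; case: (odd i). Qed.

Lemma alt_set_prefix_code : prefix_code X -> prefix_code Y ->
  forall b i, prefix_code (alt_set X Y b i).
Proof. by move=> pX pY b i; rewrite /alt_set; case: b; case: (odd i). Qed.

Lemma alt_set_suffix_code : suffix_code X -> suffix_code Y ->
  forall b i, suffix_code (alt_set X Y b i).
Proof. by move=> sX sY b i; rewrite /alt_set; case: b; case: (odd i). Qed.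

Lemma alt_factors_flatten_nil : nonempty_words X -> nonempty_words Y ->
  forall b us, alt_factors X Y b us -> flatten us = [::] -> us = [::].
Proof.
move=> neX neY b [|u us] // /alt_factors_cons[Xu _] /= /eqP.
by rewrite -nilpE cat_nilp => /andP[/nilP/(alt_set_nonempty neX neY Xu)].
Qed.

Lemma alt_factors_prefix_uniq : prefix_code X -> prefix_code Y ->
  forall b us vs, alt_factors X Y b us -> alt_factors X Y b vs ->
  flatten us = flatten vs -> us = vs.
Proof.
move=> pX pY b us; elim: us b => [|u us IHus] b [|v vs] //= fus fvs.
- by move=> /esym /(alt_factors_flatten_nil pX.1 pY.1 fvs).
- by move/(alt_factors_flatten_nil pX.1 pY.1 fus).
case/alt_factors_cons: fus => Xu fus; case/alt_factors_cons: fvs => Xv fvs.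
case/(prefix_code_catI (alt_set_prefix_code pX pY b 0) Xu Xv) => -> eq_rest.
by rewrite (IHus _ _ fus fvs eq_rest).
Qed.

Lemma alt_factors_suffix_uniq : suffix_code X -> suffix_code Y ->
  forall b us vs, alt_factors X Y b us -> alt_factors X Y b vs ->
  odd (size us) = odd (size vs) -> flatten us = flatten vs -> us = vs.
Proof.
move=> sX sY b us; elim/last_ind: us => [|us u IHus]; case/lastP=> [|vs v] //=.
- by move=> _ fvs _ /esym /(alt_factors_flatten_nil sX.1 sY.1 fvs) /(congr1 size); rewrite size_rcons.
- by move=> fus _ _ /(alt_factors_flatten_nil sX.1 sY.1 fus) /(congr1 size); rewrite size_rcons.
case/alt_factors_rcons=> fus Xu; case/alt_factors_rcons=> fvs Xv.
rewrite !size_rcons /= !flatten_rcons => /negb_inj odd_us.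
rewrite (alt_set_odd X Y b odd_us) in Xu.
case/(suffix_code_catI (alt_set_suffix_code sX sY b (size vs)) Xu Xv).
by move=> /(IHus _ fus fvs odd_us) -> ->.
Qed.

End AltSetCodes.

Lemma alt_code_of_prefix_codes X Y : prefix_code X -> prefix_code Y ->
  (exists x, X x) -> (exists y, Y y) -> alt_code X Y.
Proof.
move=> pX pY inhX inhY; split; [exact: pX.1 | exact: pY.1 | by [] | by [] |].
move=> b us vs [_ fus] [_ fvs] _.
exact: alt_factors_prefix_uniq fus fvs.
Qed.

Lemma alt_code_of_suffix_codes X Y : suffix_code X -> suffix_code Y ->
  (exists x, X x) -> (exists y, Y y) -> alt_code X Y.
Proof.
move=> sX sY inhX inhY; split; [exact: sX.1 | exact: sY.1 | by [] | by [] |].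
move=> b us vs [_ fus] [_ fvs].
exact: alt_factors_suffix_uniq fus fvs.
Qed.

Lemma alt_induced_inhabited Z : alt_induced Z -> exists z, Z z.
Proof.
by case=> X [Y [[_ _ [x Xx] [y Yy] _] defZ]]; exists (x ++ y); apply/defZ; exists x, y.
Qed.

Lemma alt_induced_lprod Z (Z' : lang A) : alt_code Z Z' -> alt_induced (lprod Z Z').
Proof. by move=> altZ; exists Z, Z'. Qed.

Lemma lprod_nonempty Z (Z' : lang A) : nonempty_words Z -> nonempty_words (lprod Z Z').
Proof. by move=> neZ _ [z [z' [Zz _ ->]]]; case: z Zz => // /neZ. Qed.

Lemma lprod_prefix_code Z (Z' : lang A) : prefix_code Z -> prefix_code Z' ->
  prefix_code (lprod Z Z').
Proof.
move=> pZ pZ'; split; first exact: lprod_nonempty pZ.1.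
move=> _ _ [z1 [z1' [Zz1 Zz1' ->]]] [z2 [z2' [Zz2 Zz2' ->]]] /prefixP[s].
rewrite -catA => /(prefix_code_catI pZ Zz2 Zz1)[-> e].
by rewrite (pZ'.2 z1' z2') // e prefix_prefix.
Qed.

Lemma lprod_suffix_code Z (Z' : lang A) : suffix_code Z -> suffix_code Z' ->
  suffix_code (lprod Z Z').
Proof.
move=> sZ sZ'; split; first exact: lprod_nonempty sZ.1.
move=> _ _ [z1 [z1' [Zz1 Zz1' ->]]] [z2 [z2' [Zz2 Zz2' ->]]] /suffixP[s].
rewrite catA => /(suffix_code_catI sZ' Zz2' Zz1')[e ->].
by rewrite (sZ.2 z1 z2) // e suffix_suffix.
Qed.

End AltInducedProduct.

Theorem propositionP (A : finType) (Z Z' : lang A) :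
  (prefix_alt_induced Z -> prefix_alt_induced Z' -> prefix_alt_induced (lprod Z Z')) /\
  (suffix_alt_induced Z -> suffix_alt_induced Z' -> suffix_alt_induced (lprod Z Z')) /\
  (bifix_alt_induced Z -> bifix_alt_induced Z' -> bifix_alt_induced (lprod Z Z')).
Proof.
have inh := @alt_induced_inhabited A.
split; last split.
- move=> [aiZ pZ] [aiZ' pZ']; split; last exact: lprod_prefix_code.
  by apply/alt_induced_lprod/alt_code_of_prefix_codes; auto.
- move=> [aiZ sZ] [aiZ' sZ']; split; last exact: lprod_suffix_code.
  by apply/alt_induced_lprod/alt_code_of_suffix_codes; auto.
move=> [aiZ [pZ sZ]] [aiZ' [pZ' sZ']].
split; last by split; [apply: lprod_prefix_code | apply: lprod_suffix_code].
by apply/alt_induced_lprod/alt_code_of_prefix_codes; auto.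
Qed.
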